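(* Let $\mathfrak g\xrightarrow{\mu}\mathfrak h$ be a crossed module of Lie algebras with action $\mathcal L$, let $\phi:W\to V$ be linear and $(\rho_0^1,\rho_0^0,\rho_1)$ a 2-representation on $\phi$. Then $$\bar\rho:\mathfrak g\oplus_{\mathcal L}\mathfrak h\to\mathfrak{gl}(W\oplus V),\qquad (x,y)\mapsto\begin{pmatrix}\rho_0^1(y+\mu(x)) & \rho_1(x)\\ 0 & \rho_0^0(y)\end{pmatrix}$$ (acting on column vectors $(w,v)$) is a Lie algebra representation.
   Context: A crossed module of Lie algebras consists of Lie algebras $\mathfrak g,\mathfrak h$, a Lie algebra homomorphism $\mu:\mathfrak g\to\mathfrak h$ and a Lie algebra homomorphism $\mathcal L:\mathfrak h\to\mathrm{Der}(\mathfrak g)$ with $\mu(\mathcal L_yx)=[y,\mu(x)]$ and $\mathcal L_{\mu(x_0)}x_1=[x_0,x_1]$. $\mathfrak g\oplus_{\mathcal L}\mathfrak h$ is $\mathfrak g\oplus\mathfrak h$ with bracket $[(x_0,y_0),(x_1,y_1)]=([x_0,x_1]+\mathcal L_{y_0}x_1-\mathcal L_{y_1}x_0,[y_0,y_1])$. A 2-representation on $\phi:W\to V$: linear maps $\rho_0^1:\mathfrak h\to\mathfrak{gl}(W)$, $\rho_0^0:\mathfrak h\to\mathfrak{gl}(V)$, $\rho_1:\mathfrak g\to\mathrm{Hom}(V,W)$ with $\rho_0^1,\rho_0^0$ Lie algebra representations, $\phi\rho_0^1(y)=\rho_0^0(y)\phi$, $\rho_1([x_0,x_1])=\rho_1(x_0)\phi\rho_1(x_1)-\rho_1(x_1)\phi\rho_1(x_0)$,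 $\rho_0^0(\mu(x))=\phi\rho_1(x)$, $\rho_0^1(\mu(x))=\rho_1(x)\phi$, $\rho_1(\mathcal L_yx)=\rho_0^1(y)\rho_1(x)-\rho_1(x)\rho_0^0(y)$. *)

From HB Require Import structures.
From mathcomp Require Import all_boot all_algebra.
Set Implicit Arguments. Unset Strict Implicit. Unset Printing Implicit Defensive.
Import GRing.Theory.
Local Open Scope ring_scope.

Definition is_lin (K : fieldType) (A B : lmodType K) (f : A -> B) : Prop :=
  forall (a : K) (u v : A), f (a *: u + v) = a *: f u + f v.

Definition is_lie (K : fieldType) (A : lmodType K) (br : A -> A -> A) : Prop :=
  [/\ forall x, is_lin (br x),
      forall y, is_lin (fun x => br x y),
      forall x, br x x = 0 &
      forall x y z, br x (br y z) + br y (br z x) + br z (br x y) = 0].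

Definition is_lie_hom (K : fieldType) (A B : lmodType K)
  (brA : A -> A -> A) (brB : B -> B -> B) (f : A -> B) : Prop :=
  is_lin f /\ forall x y, f (brA x y) = brB (f x) (f y).

Definition is_rep (K : fieldType) (A M : lmodType K)
  (br : A -> A -> A) (rho : A -> M -> M) : Prop :=
  [/\ forall x, is_lin (rho x),
      forall (a : K) x y m, rho (a *: x + y) m = a *: rho x m + rho y m &
      forall x y m, rho (br x y) m = rho x (rho y m) - rho y (rho x m)].

Definition crossed_module (K : fieldType) (g h : lmodType K)
  (bg : g -> g -> g) (bh : h -> h -> h) (mu : g -> h) (L : h -> g -> g) : Prop :=
  is_lie bg /\ is_lie bh /\ is_lie_hom bg bh mu /\
      [/\ forall y, is_lin (L y),
          forall (a : K) y0 y1 x, L (a *: y0 + y1) x = a *: L y0 x + L y1 x,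
          forall y x0 x1, L y (bg x0 x1) = bg (L y x0) x1 + bg x0 (L y x1) &
          forall y0 y1 x, L (bh y0 y1) x = L y0 (L y1 x) - L y1 (L y0 x)] /\
      (forall y x, mu (L y x) = bh y (mu x)) /\
      (forall x0 x1, L (mu x0) x1 = bg x0 x1).

Definition two_rep (K : fieldType) (g h W V : lmodType K)
  (bg : g -> g -> g) (bh : h -> h -> h) (mu : g -> h) (L : h -> g -> g)
  (phi : W -> V) (rho01 : h -> W -> W) (rho00 : h -> V -> V)
  (rho1 : g -> V -> W) : Prop :=
  is_rep bh rho01 /\ is_rep bh rho00 /\
      (forall x, is_lin (rho1 x)) /\
      (forall (a : K) x0 x1 v, rho1 (a *: x0 + x1) v = a *: rho1 x0 v + rho1 x1 v) /\
      (forall y w, phi (rho01 y w) = rho00 y (phi w)) /\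
      (forall x0 x1 v, rho1 (bg x0 x1) v =
                      rho1 x0 (phi (rho1 x1 v)) - rho1 x1 (phi (rho1 x0 v))) /\
      (forall x v, rho00 (mu x) v = phi (rho1 x v)) /\
      (forall x w, rho01 (mu x) w = rho1 x (phi w)) /\
      (forall y x v, rho1 (L y x) v = rho01 y (rho1 x v) - rho1 x (rho00 y v)).

Definition semidirect_bracket (K : fieldType) (g h : lmodType K)
  (bg : g -> g -> g) (bh : h -> h -> h) (L : h -> g -> g)
  (p q : g * h) : g * h :=
  (bg p.1 q.1 + L p.2 q.1 - L q.2 p.1, bh p.2 q.2).

(* rho_bar (x,y) acting on the column vector (w,v):
   [ rho01 (y + mu x)   rho1 x    ] [w]
   [ 0                  rho00 y   ] [v] *)
Definition rho_bar (K : fieldType) (g h W V : lmodType K)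
  (mu : g -> h) (rho01 : h -> W -> W) (rho00 : h -> V -> V)
  (rho1 : g -> V -> W) (p : g * h) (m : W * V) : W * V :=
  (rho01 (p.2 + mu p.1) m.1 + rho1 p.1 m.2, rho00 p.2 m.2).

From mathcomp Require Import all_boot all_algebra.
Set Implicit Arguments. Unset Strict Implicit. Unset Printing Implicit Defensive.
Import GRing.Theory.
Local Open Scope ring_scope.

(** The matrix of [rho_bar (x, y)] is block upper triangular.  Its diagonal
   blocks are the pullbacks of [rho01] and [rho00] along the Lie algebra
   morphisms [(x, y) |-> y + mu x] and [(x, y) |-> y] out of the semidirect
   sum, and its corner [rho1 x] is a 1-cocycle with values in [Hom(V, W)];
   these three facts are exactly what makes a block upper triangular map a
   representation.  The cocycle identity is the Leibniz-type axiom
   [rho1 (L_y x) = rho01 y o rho1 x - rho1 x o rho00 y] combined with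
   [rho01 (mu x) = rho1 x o phi]. *)

Section Linearity.
Variables (K : fieldType) (A B : lmodType K) (f : A -> B).
Hypothesis f_lin : is_lin f.

Lemma is_linD u v : f (u + v) = f u + f v.
Proof. by have := f_lin 1 u v; rewrite !scale1r. Qed.

Lemma is_lin0 : f 0 = 0.
Proof. by apply: (addIr (f 0)); rewrite -is_linD !add0r. Qed.

Lemma is_linN u : f (- u) = - f u.
Proof. by have := f_lin (-1) u 0; rewrite !addr0 is_lin0 addr0 !scaleN1r. Qed.

Lemma is_linB u v : f (u - v) = f u - f v.
Proof. by rewrite is_linD is_linN. Qed.

End Linearity.

Lemma is_lie_anti (K : fieldType) (A : lmodType K) (br : A -> A -> A) :
  is_lie br -> forall x y, br x y = - br y x.
Proof.
case=> brL brR br0 _ x y; apply/eqP; rewrite -addr_eq0.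
have := br0 (x + y).
by rewrite (is_linD (brL _)) !(is_linD (brR _)) !br0 add0r addr0 addrC => ->.
Qed.

Lemma is_rep_comp (K : fieldType) (A B M : lmodType K)
    (brA : A -> A -> A) (brB : B -> B -> B) (f : A -> B) (rho : B -> M -> M) :
  is_lie_hom brA brB f -> is_rep brB rho -> is_rep brA (fun x => rho (f x)).
Proof.
case=> f_lin f_br [rhoL rhoA rhoB]; split=> [x | a x y m | x y m].
- exact: rhoL.
- by rewrite f_lin rhoA.
- by rewrite f_br rhoB.
Qed.

Section BlockTriangular.
Variables (K : fieldType) (A W V : lmodType K) (br : A -> A -> A).

Definition block_ut (a : A -> W -> W) (b : A -> V -> W) (d : A -> V -> V)
    (p : A) (m : W * V) : W * V :=
  (a p m.1 + b p m.2, d p m.2).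

Lemma block_ut_rep (a : A -> W -> W) (b : A -> V -> W) (d : A -> V -> V) :
  is_rep br a -> is_rep br d ->
  (forall p, is_lin (b p)) ->
  (forall (c : K) p q m, b (c *: p + q) m = c *: b p m + b q m) ->
  (forall p q m,
     b (br p q) m = (a p (b q m) - b q (d p m)) - (a q (b p m) - b p (d q m))) ->
  is_rep br (block_ut a b d).
Proof.
move=> [aL aA aB] [dL dA dB] bL bA b_cocycle.
split=> [p c [w1 v1] [w2 v2] | c p q [w v] | p q [w v]];
  rewrite /block_ut [RHS]surjective_pairing /=.
- by rewrite aL bL dL scalerDr addrACA.
- by rewrite aA bA dA scalerDr addrACA.
- rewrite aB dB b_cocycle !(is_linD (aL _)) !opprD !addrA.
  by congr (_, _); rewrite opprK [LHS](ACl (1*3*6*2*5*4)).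
Qed.

End BlockTriangular.

Section CrossedModule.
Variables (K : fieldType) (g h W V : lmodType K).
Variables (bg : g -> g -> g) (bh : h -> h -> h) (mu : g -> h) (L : h -> g -> g).
Hypothesis cm : crossed_module bg bh mu L.

Local Notation sbr := (semidirect_bracket bg bh L).

Lemma semidirect_snd_hom : is_lie_hom sbr bh snd.
Proof. by []. Qed.

Lemma semidirect_sum_hom : is_lie_hom sbr bh (fun p => p.2 + mu p.1).
Proof.
have [_ [bh_lie [[muL muB] [_ [muLx _]]]]] := cm.
have [bhL bhR _ _] := bh_lie.
split=> [c [x0 y0] [x1 y1] | [x0 y0] [x1 y1]] /=.
  by rewrite muL scalerDr addrACA.
rewrite (is_linB muL) (is_linD muL) muB !muLx.
rewrite (is_lie_anti bh_lie y1) opprK !(is_linD (bhR _)) !(is_linD (bhL _)).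
by rewrite !addrA [LHS](ACl (1*3*4*2)).
Qed.

Variables (phi : W -> V) (rho01 : h -> W -> W) (rho00 : h -> V -> V).
Variable (rho1 : g -> V -> W).
Hypothesis tr : two_rep bg bh mu L phi rho01 rho00 rho1.

Lemma two_rep_cocycle (x0 x1 : g) (y0 y1 : h) (v : V) :
  rho1 (bg x0 x1 + L y0 x1 - L y1 x0) v =
    (rho01 (y0 + mu x0) (rho1 x1 v) - rho1 x1 (rho00 y0 v))
  - (rho01 (y1 + mu x1) (rho1 x0 v) - rho1 x0 (rho00 y1 v)).
Proof.
have [[_ r01A _] [_ [_ [r1A [_ [r1B [_ [r01mu r1L]]]]]]]] := tr.
have r01lin w : is_lin (rho01 ^~ w) by move=> c y y'; apply: r01A.
have r1lin v' : is_lin (rho1 ^~ v') by move=> c x x'; apply: r1A.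
rewrite (is_linB (r1lin v)) (is_linD (r1lin v)) r1B !r1L.
rewrite !(is_linD (r01lin _)) !r01mu.
by rewrite !opprD !opprK !addrA [LHS](ACl (3*1*4*5*2*6)).
Qed.

End CrossedModule.

Theorem mainTheorem3 (K : fieldType) (g h W V : lmodType K)
  (bg : g -> g -> g) (bh : h -> h -> h) (mu : g -> h) (L : h -> g -> g)
  (phi : W -> V) (rho01 : h -> W -> W) (rho00 : h -> V -> V)
  (rho1 : g -> V -> W) :
  crossed_module bg bh mu L ->
  is_lin phi ->
  two_rep bg bh mu L phi rho01 rho00 rho1 ->
  is_rep (semidirect_bracket bg bh L) (rho_bar mu rho01 rho00 rho1).
Proof.
move=> cm _ tr; have [r01_rep [r00_rep [r1L [r1A _]]]] := tr.
apply: (@block_ut_rep K (g * h)%type W V (semidirect_bracket bg bh L)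
          (fun p => rho01 (p.2 + mu p.1)) (fun p => rho1 p.1) (fun p => rho00 p.2)).
- exact: is_rep_comp (semidirect_sum_hom cm) r01_rep.
- exact: is_rep_comp (semidirect_snd_hom bg bh L) r00_rep.
- by move=> p; apply: r1L.
- by move=> c p q m; apply: r1A.
- by move=> [x0 y0] [x1 y1] v; exact: (two_rep_cocycle tr x0 x1 y0 y1 v).
Qed.
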